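(* Let $G$ and $H$ be nontrivial finite connected simple graphs and let $\ell\geq 1$ be an integer. (1) If $S$ is an $\ell$-solid-resolving set of $G\Box H$, then the projection of $S$ onto $G$ is an $\ell$-solid-resolving set of $G$, and the projection of $S$ onto $H$ is an $\ell$-solid-resolving set of $H$. (2) If $T$ is an $\ell$-solid-resolving set of $G$ and $U$ is an $\ell$-solid-resolving set of $H$, then $T\times U=\{tu: t\in T,u\in U\}$ is an $\ell$-solid-resolving set of $G\Box H$. (3) $\max\{\beta_\ell^s(G),\beta_\ell^s(H)\}\leq \beta_\ell^s(G\Box H)\leq \beta_\ell^s(G)\cdot\beta_\ell^s(H)$.
   Context: The Cartesian product $G\Box H$ has vertex set $\{av: a\in V(G), v\in V(H)\}$, with distinct $av,bu$ adjacent iff ($a=b$ and $uv\in E(H)$) or ($ab\in E(G)$ and $u=v$). The projection of $X\subseteq V(G\Box H)$ onto $G$ is $\{x_1: x_1x_2\in X\}$, and onto $H$ is $\{x_2: x_1x_2\in X\}$. For a graph, $d$ is the shortest-path distance, $d(s,X)=\min_{x\in X}d(s,x)$ for nonempty $X$, and $\mathcal{D}_S(X)=(d(s_1,X),\dots,d(s_k,X))$ for $S=\{s_1,\dots,s_k\}$. $S$ is an $\ell$-solid-resolving set if $\mathcal{D}_S(X)\neq\mathcal{D}_S(Y)$ for all distinct nonempty vertex sets $X,Y$ with $|X|\leq\ell$ ($Y$ arbitrary); $\beta_\ell^s$ is the minimum size of such a set. *)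

From mathcomp Require Import all_boot.
Set Implicit Arguments. Unset Strict Implicit. Unset Printing Implicit Defensive.

Definition simple_graph (V : finType) (e : rel V) :=
  symmetric e /\ irreflexive e.

Definition connected_graph (V : finType) (e : rel V) :=
  forall x y : V, connect e x y.

Definition nontrivial (V : finType) := 1 < #|V|.

Definition walk_len (V : finType) (e : rel V) (x y : V) (k : nat) : bool :=
  [exists p : k.-tuple V, path e x p && (last x p == y)].

(* shortest-path distance: least k with a walk of length k from x to y
   (returns #|V| if y is unreachable, which cannot happen when connected) *)
Definition dist (V : finType) (e : rel V) (x y : V) : nat :=
  find (walk_len e x y) (iota 0 #|V|).

(* d(s, X) = min_{x in X} d(s, x)  (only used for nonempty X) *)
Definition dist_set (V : finType) (e : rel V) (s : V) (X : {set V}) : nat :=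
  \big[minn/#|V|]_(x in X) dist e s x.

Definition solid_resolving (V : finType) (e : rel V) (l : nat) (S : {set V}) : bool :=
  [forall X : {set V}, forall Y : {set V},
    [&& X != set0, Y != set0, #|X| <= l & X != Y] ==>
    [exists s in S, dist_set e s X != dist_set e s Y]].

(* beta^s_l: minimum size of an l-solid-resolving set (V itself is one) *)
Definition beta_solid (V : finType) (e : rel V) (l : nat) : nat :=
  \big[minn/#|V|]_(S : {set V} | solid_resolving e l S) #|S|.

Definition cart (V1 V2 : finType) (e1 : rel V1) (e2 : rel V2) : rel (V1 * V2) :=
  fun a b => ((a.1 == b.1) && e2 a.2 b.2) || (e1 a.1 b.1 && (a.2 == b.2)).

(* The distance of the Cartesian product is the sum of the distances of the
   factors.  A set S is l-solid-resolving iff for every nonempty X with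
   |X| <= l and every y outside X some s in S is strictly closer to y than to
   every point of X.  Projections: separating (y, v) from X x {v} in the
   product, the H-coordinate contributes the same summand d(u, v) on both
   sides, so the G-coordinate of the separating vertex separates y from X.
   Products: pick t in T separating y.1 from the first coordinates of the
   points of X that differ from y in the first coordinate, and u in U
   likewise; then (t, u) is weakly closer to y in both coordinates and
   strictly in one. *)

From mathcomp Require Import all_boot order.
Set Implicit Arguments. Unset Strict Implicit. Unset Printing Implicit Defensive.

Import Order.TTheory.

Section Walks.
Variables (V : finType) (e : rel V).

Inductive walk : V -> V -> nat -> Prop :=
| walk_nil x : walk x x 0
| walk_cons x x' y k : e x x' -> walk x' y k -> walk x y k.+1.

Lemma path_walk x p : path e x p -> walk x (last x p) (size p).
Proof.
elim: p x => [|y p IHp] x /=; first by move=> _; apply: walk_nil.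
by case/andP=> exy /IHp; apply: walk_cons.
Qed.

Lemma walk_path x y k : walk x y k -> exists2 p : k.-tuple V, path e x p & last x p = y.
Proof.
elim=> [z | z z' y' k' ezz' _ [p pp lp]]; first by exists [tuple].
by exists [tuple of z' :: p]; rewrite /= ?ezz'.
Qed.

Lemma walk_lenP x y k : reflect (walk x y k) (walk_len e x y k).
Proof.
apply: (iffP existsP) => [[p /andP [pp /eqP <-]] | /walk_path [p pp lp]].
  by have := path_walk pp; rewrite size_tuple.
by exists p; rewrite pp lp eqxx.
Qed.

Lemma walk_cat x y z k m : walk x y k -> walk y z m -> walk x z (k + m).
Proof.
by elim=> // x0 x' y' k' ex _ IH /IH; rewrite addSn; apply: walk_cons.
Qed.

Lemma walk_connect x y k : walk x y k -> connect e x y.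
Proof.
elim=> [x0 | x0 x' y' k' ex _ IH]; first exact: connect0.
exact: connect_trans (connect1 ex) IH.
Qed.

Lemma connect_walk x y : connect e x y -> exists2 k, k < #|V| & walk x y k.
Proof.
case/connectP=> p pp ->; case/shortenP: pp => q pq uq _.
exists (size q); last exact: path_walk.
by have := max_card (mem (x :: q)); rewrite (card_uniqP uq).
Qed.

Lemma dist_max x y : dist e x y <= #|V|.
Proof. by rewrite /dist -[X in _ <= X](size_iota 0) find_size. Qed.

Lemma dist_le x y k : walk x y k -> dist e x y <= k.
Proof.
move=> wk; have [ltkV | leVk] := ltnP k #|V|; last exact: leq_trans (dist_max x y) leVk.
rewrite leqNgt; apply/negP => /(before_find 0).
by rewrite nth_iota // add0n => /walk_lenP.
Qed.

Hypothesis e_connected : connected_graph e.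

Lemma dist_walk x y : walk x y (dist e x y).
Proof.
have [k ltkV wk] := connect_walk (e_connected x y).
have has_walk : has (walk_len e x y) (iota 0 #|V|).
  by apply/hasP; exists k; rewrite ?mem_iota //; apply/walk_lenP.
have := nth_find 0 has_walk; rewrite has_find size_iota in has_walk.
by rewrite nth_iota // add0n => /walk_lenP.
Qed.

Lemma dist_eq0 x y : (dist e x y == 0) = (x == y).
Proof.
apply/eqP/eqP => [d0 | <-]; last by apply/eqP; rewrite -leqn0 dist_le //; apply: walk_nil.
by have := dist_walk x y; rewrite d0 => w0; inversion w0.
Qed.

End Walks.

Section SolidResolving.
Variables (V : finType) (e : rel V).
Implicit Types (S X : {set V}) (s x y : V).

Lemma dist_set_le s X x : x \in X -> dist_set e s X <= dist e s x.
Proof. by rewrite /dist_set -minEnat; exact: (@bigmin_le_cond _ nat). Qed.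

Lemma dist_set_gt s X m :
  X != set0 -> {in X, forall x, m < dist e s x} -> m < dist_set e s X.
Proof.
case/set0Pn=> x0 Xx0 ltm; rewrite /dist_set -minEnat; apply/(@bigmin_gtP _ nat).
by split=> [|x /ltm //]; apply: leq_trans (ltm _ Xx0) (dist_max _ _ _).
Qed.

Lemma dist_setU1 s X y :
  y \notin X -> dist_set e s (y |: X) = minn (dist e s y) (dist_set e s X).
Proof.
move=> Xy; rewrite /dist_set -minEnat (@bigminD1 _ nat _ _ y) ?setU11 //.
congr Order.min; apply: eq_bigl => x; rewrite !inE.
by case: eqVneq => [->|]; rewrite ?(negbTE Xy) ?andbT ?andbF.
Qed.

Lemma solidP l S : reflect
  (forall X y, X != set0 -> #|X| <= l -> y \notin X ->
     exists2 s, s \in S & {in X, forall x, dist e s y < dist e s x})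
  (solid_resolving e l S).
Proof.
apply: (iffP forallP) => [solidS X y X0 leXl Xy | sepS X].
  have /forallP/(_ (y |: X)) := solidS X.
  have X_neq_yX : X != y |: X by apply: contraNneq Xy => ->; rewrite setU11.
  have yX0 : y |: X != set0 by apply/set0Pn; exists y; rewrite setU11.
  rewrite X0 yX0 leXl X_neq_yX => /existsP [s /andP [Ss]].
  rewrite dist_setU1 // eq_sym.
  case: (leqP (dist_set e s X) (dist e s y)) => [_ /eqP // | ltyX _].
  by exists s => // x /(dist_set_le s) /(leq_trans ltyX).
apply/forallP=> Y; apply/implyP=> /and4P [X0 Y0 leXl neqXY].
have [subYX | /subsetPn [y Yy Xy]] := boolP (Y \subset X).
  have /subsetPn [x Xx Yx] : ~~ (X \subset Y).
    by apply: contra neqXY => subXY; rewrite eqEsubset subXY.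
  have [s Ss sepY] := sepS Y x Y0 (leq_trans (subset_leq_card subYX) leXl) Yx.
  apply/existsP; exists s; rewrite Ss ltn_eqF //.
  exact: leq_ltn_trans (dist_set_le s Xx) (dist_set_gt Y0 sepY).
have [s Ss sepX] := sepS X y X0 leXl Xy.
apply/existsP; exists s; rewrite Ss eq_sym ltn_eqF //.
exact: leq_ltn_trans (dist_set_le s Yy) (dist_set_gt X0 sepX).
Qed.

Lemma solid_resolving_sep l S X y :
  nontrivial V -> 0 < l -> solid_resolving e l S -> #|X| <= l -> y \notin X ->
  exists2 s, s \in S & {in X, forall x, dist e s y < dist e s x}.
Proof.
move=> /card_gt1P [a [b [_ _ neq_ab]]] l_gt0 /solidP sepS leXl Xy.
have [-> | X0] := eqVneq X set0; last exact: sepS.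
have a0 : [set a] != set0 by apply/set0Pn; exists a; rewrite inE.
have Ab : b \notin [set a] by rewrite inE eq_sym.
have [s Ss _] := sepS [set a] b a0 (leq_trans (eq_leq (cards1 a)) l_gt0) Ab.
by exists s => // x; rewrite inE.
Qed.

Hypothesis e_connected : connected_graph e.

Variable l : nat.

Lemma solid_resolving_setT : solid_resolving e l setT.
Proof.
apply/solidP=> X y _ _ Xy; exists y; rewrite ?inE // => x Xx.
have /eqP -> : dist e y y == 0 by rewrite dist_eq0.
by rewrite lt0n dist_eq0 //; apply: contraNneq Xy => ->.
Qed.

Lemma beta_solid_le S : solid_resolving e l S -> beta_solid e l <= #|S|.
Proof. by rewrite /beta_solid -minEnat; apply: (@bigmin_le_cond _ nat). Qed.

Lemma beta_solid_attained :
  exists2 S, solid_resolving e l S & beta_solid e l = #|S|.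
Proof.
rewrite /beta_solid -minEnat.
have [S solS ->] := @eq_bigmin _ nat _ #|V| setT (solid_resolving e l) (fun S => #|S|)
  solid_resolving_setT (fun S _ => max_card S).
by exists S.
Qed.

End SolidResolving.

Section SolidResolvingMaps.
Variables (V W : finType) (eV : rel V) (eW : rel W) (l : nat).

Lemma solid_resolving_imset (i : V -> W) (p : W -> V) (S : {set W}) :
  injective i ->
  (forall s x y,
     dist eW s (i y) < dist eW s (i x) -> dist eV (p s) y < dist eV (p s) x) ->
  solid_resolving eW l S -> solid_resolving eV l (p @: S).
Proof.
move=> inj_i sep_ip /solidP sepS; apply/solidP => X y X0 leXl Xy.
have iX0 : i @: X != set0 by rewrite imset_eq0.
have leiXl : #|i @: X| <= l := leq_trans (leq_imset_card i X) leXl.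
have iXy : i y \notin i @: X by rewrite mem_imset.
have [s Ss sep_s] := sepS _ _ iX0 leiXl iXy.
by exists (p s); [apply: imset_f | move=> x Xx; apply/sep_ip/sep_s/imset_f].
Qed.

Lemma solid_resolving_sep_leqif (f : W -> V) (S : {set V}) (X : {set W}) y :
  nontrivial V -> 0 < l -> solid_resolving eV l S -> #|X| <= l ->
  exists2 s, s \in S &
    {in X, forall x, dist eV s (f y) <= dist eV s (f x) ?= iff (f x == f y)}.
Proof.
move=> ntV l_gt0 solS leXl.
pose Xf := f @: [set x in X | f x != f y].
have leXfl : #|Xf| <= l.
  apply: leq_trans (leq_imset_card _ _) (leq_trans (subset_leq_card _) leXl).
  by apply/subsetP=> x; rewrite inE => /andP [].
have Xfy : f y \notin Xf.
  by apply/imsetP=> [[x]]; rewrite inE => /andP [_ ne] E; rewrite E eqxx in ne.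
have [s Ss sep_s] := solid_resolving_sep ntV l_gt0 solS leXfl Xfy.
exists s => // x Xx; apply/leqifP; case: eqVneq => [-> // | ne].
by apply: sep_s; apply: imset_f; rewrite inE Xx ne.
Qed.

End SolidResolvingMaps.

Section Cartesian.
Variables (V1 V2 : finType) (e1 : rel V1) (e2 : rel V2).
Local Notation e := (cart e1 e2).

Lemma walk_cart1 a b u k : walk e1 a b k -> walk e (a, u) (b, u) k.
Proof.
elim=> [x | x x' y k' ex _ IH]; first exact: walk_nil.
by apply: walk_cons IH; rewrite /cart /= ex eqxx orbT.
Qed.

Lemma walk_cart2 a u v k : walk e2 u v k -> walk e (a, u) (a, v) k.
Proof.
elim=> [x | x x' y k' ex _ IH]; first exact: walk_nil.
by apply: walk_cons IH; rewrite /cart /= ex eqxx.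
Qed.

Lemma walk_cart_split x z k : walk e x z k ->
  exists k1 k2, [/\ k = k1 + k2, walk e1 x.1 z.1 k1 & walk e2 x.2 z.2 k2].
Proof.
elim=> [x0 | x0 x' y k' ex _ [k1 [k2 [-> w1 w2]]]].
  by exists 0, 0; split=> //; apply: walk_nil.
case/orP: ex => /andP [ex ex'].
  by exists k1, k2.+1; rewrite addnS (eqP ex); split=> //; apply: walk_cons ex' w2.
by exists k1.+1, k2; rewrite addSn (eqP ex'); split=> //; apply: walk_cons ex w1.
Qed.

Hypotheses (e1_connected : connected_graph e1) (e2_connected : connected_graph e2).

Lemma walk_cart a b u v : walk e (a, u) (b, v) (dist e1 a b + dist e2 u v).
Proof.
exact: walk_cat (walk_cart1 u (dist_walk e1_connected a b))
                (walk_cart2 b (dist_walk e2_connected u v)).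
Qed.

Lemma cart_connected : connected_graph e.
Proof. by move=> [a u] [b v]; apply: walk_connect (walk_cart a b u v). Qed.

Lemma dist_cart x y : dist e x y = dist e1 x.1 y.1 + dist e2 x.2 y.2.
Proof.
apply/eqP; rewrite eqn_leq; case: x y => [a u] [b v].
rewrite (dist_le (walk_cart a b u v)) /=.
have [k1 [k2 [-> w1 w2]]] := walk_cart_split (dist_walk cart_connected (a, u) (b, v)).
by rewrite leq_add // dist_le.
Qed.

Variable l : nat.

Lemma solid_resolving_fst (S : {set V1 * V2}) : nontrivial V2 ->
  solid_resolving e l S -> solid_resolving e1 l [set x.1 | x in S].
Proof.
case/card_gt1P=> v _; apply: (solid_resolving_imset (i := fun a => (a, v))).
  by move=> a b [].
by move=> s x y; rewrite !dist_cart ltn_add2r.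
Qed.

Lemma solid_resolving_snd (S : {set V1 * V2}) : nontrivial V1 ->
  solid_resolving e l S -> solid_resolving e2 l [set x.2 | x in S].
Proof.
case/card_gt1P=> a _; apply: (solid_resolving_imset (i := fun v => (a, v))).
  by move=> u v [].
by move=> s x y; rewrite !dist_cart ltn_add2l.
Qed.

Lemma solid_resolving_setX (T : {set V1}) (U : {set V2}) :
  nontrivial V1 -> nontrivial V2 -> 0 < l ->
  solid_resolving e1 l T -> solid_resolving e2 l U -> solid_resolving e l (setX T U).
Proof.
move=> ntV1 ntV2 l_gt0 solT solU; apply/solidP => X y _ leXl Xy.
have [t Tt sep_t] := solid_resolving_sep_leqif (fun x => x.1) y ntV1 l_gt0 solT leXl.
have [u Uu sep_u] := solid_resolving_sep_leqif (fun x => x.2) y ntV2 l_gt0 solU leXl.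
exists (t, u); first by rewrite in_setX Tt Uu.
move=> x Xx; rewrite !dist_cart (ltn_leqif (leqif_add (sep_t x Xx) (sep_u x Xx))).
by rewrite -[_ && _]/(x == y); apply: contraNneq Xy => <-.
Qed.

End Cartesian.

Theorem mainTheorem8 (V1 V2 : finType) (e1 : rel V1) (e2 : rel V2)
  (sg1 : simple_graph e1) (sg2 : simple_graph e2)
  (c1 : connected_graph e1) (c2 : connected_graph e2)
  (n1 : nontrivial V1) (n2 : nontrivial V2)
  (l : nat) (hl : 1 <= l) :
  (forall S : {set V1 * V2}, solid_resolving (cart e1 e2) l S ->
     solid_resolving e1 l [set x.1 | x in S] /\
     solid_resolving e2 l [set x.2 | x in S]) /\
  (forall (T : {set V1}) (U : {set V2}),
     solid_resolving e1 l T -> solid_resolving e2 l U ->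
     solid_resolving (cart e1 e2) l (setX T U)) /\
  (maxn (beta_solid e1 l) (beta_solid e2 l) <= beta_solid (cart e1 e2) l
   <= beta_solid e1 l * beta_solid e2 l).
Proof.
have setX_solid T U := @solid_resolving_setX _ _ _ _ c1 c2 l T U n1 n2 hl.
split.
  move=> S solS.
  exact: conj (solid_resolving_fst c1 c2 n2 solS) (solid_resolving_snd c1 c2 n1 solS).
split; first exact: setX_solid.
apply/andP; split.
  have [S solS ->] := beta_solid_attained (cart_connected c1 c2) l.
  have solS1 := solid_resolving_fst c1 c2 n2 solS.
  have solS2 := solid_resolving_snd c1 c2 n1 solS.
  rewrite geq_max; apply/andP; split.
    exact: leq_trans (beta_solid_le solS1) (leq_imset_card _ _).
  exact: leq_trans (beta_solid_le solS2) (leq_imset_card _ _).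
have [T solT ->] := beta_solid_attained c1 l.
have [U solU ->] := beta_solid_attained c2 l.
by rewrite -cardsX beta_solid_le // setX_solid.
Qed.
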